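(* Let $N\ge1$, let $U\in\mathrm U(2N)$ with upper-left $N\times N$ block $A$, and let $A=W_1\Sigma V_1^\dagger$ be a singular value decomposition, $\Sigma=\mathrm{diag}(\sigma_0,\dots,\sigma_{N-1})$. Let $d\ge1$ and $\varphi_0,\dots,\varphi_{2d}\in\mathbb R$, put $Z_\varphi:=\mathrm{diag}(e^{i\varphi}I_N,e^{-i\varphi}I_N)$, and define the $2N\times 2N$ unitary $$\mathcal O:=Z_{\varphi_0}\prod_{j=1}^d\big(U^\dagger Z_{\varphi_{2j-1}}UZ_{\varphi_{2j}}\big).$$ Define $\tilde\varphi_0=\varphi_0+\pi/4$, $\tilde\varphi_{2d}=\varphi_{2d}+\pi/4$, $\tilde\varphi_i=\varphi_i+\pi/2$ for even $i\in\{2,\dots,2d-2\}$, and $\tilde\varphi_i=\varphi_i-\pi/2$ for odd $i$, and let $P(x):=\langle 0|e^{i\tilde\varphi_0Z}\prod_{j=1}^{2d}W(x)e^{i\tilde\varphi_jZ}|0\rangle$. Then $P$ is an even polynomial of degree at most $2d$, and the upper-left $N\times N$ block of $\mathcal O$ equals $V_1P(\Sigma)V_1^\dagger$; equivalently, writing $P(x)=\tilde P(x^2)$, it equals $\tilde P(A^\dagger A)$.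
   Context: $W(x):=\begin{pmatrix}x& i\sqrt{1-x^2}\\ i\sqrt{1-x^2}&x\end{pmatrix}$ for $x\in[-1,1]$, $Z=\mathrm{diag}(1,-1)$, and $P(\Sigma)=\mathrm{diag}(P(\sigma_0),\dots,P(\sigma_{N-1}))$. The ''upper-left block'' of a $2N\times2N$ matrix $B$ is $(\langle0|\otimes I_N)B(|0\rangle\otimes I_N)$. *)

From HB Require Import structures.
From mathcomp Require Import all_boot all_order all_algebra.
From mathcomp Require Import complex.
From mathcomp Require Import reals trigo.
Set Implicit Arguments. Unset Strict Implicit. Unset Printing Implicit Defensive.
Import Order.TTheory GRing.Theory Num.Theory.
Local Open Scope ring_scope.
Local Open Scope complex_scope.

Section Defs.
Variable R : realType.
Local Notation C := R[i].

Definition expi (t : R) : C := (cos t)%:C + 'i * (sin t)%:C.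

Definition adj m n (A : 'M[C]_(m, n)) : 'M[C]_(n, m) :=
  \matrix_(i, j) (A j i)^*.

Definition unitary n (U : 'M[C]_n) : Prop :=
  U *m adj U = 1%:M /\ adj U *m U = 1%:M.

Definition Zphi N (phi : R) : 'M[C]_(N + N) :=
  block_mx ((expi phi)%:M) 0 0 ((expi (- phi))%:M).

Definition Oseq N (U : 'M[C]_(N + N)) (d : nat) (phi : nat -> R) : 'M[C]_(N + N) :=
  Zphi N (phi 0%N) *m
  \big[mulmx/1%:M]_(1 <= j < d.+1)
     (adj U *m Zphi N (phi (2 * j).-1) *m U *m Zphi N (phi (2 * j)%N)).

Definition phit (d : nat) (phi : nat -> R) (i : nat) : R :=
  if i == 0%N then phi 0%N + pi / 4
  else if i == (2 * d)%N then phi (2 * d)%N + pi / 4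
  else if odd i then phi i - pi / 2
  else phi i + pi / 2.

Definition Wx (x : R) : 'M[C]_2 :=
  \matrix_(i < 2, j < 2)
    (if i == j then x%:C else 'i * (Num.sqrt (1 - x ^+ 2))%:C).

Definition expZ (t : R) : 'M[C]_2 :=
  \matrix_(i < 2, j < 2)
    (if i == j then (if i == 0 :> nat then expi t else expi (- t)) else 0).

Definition Pqsp (d : nat) (phi : nat -> R) (x : R) : C :=
  (expZ (phit d phi 0%N) *m
   \big[mulmx/1%:M]_(1 <= j < (2 * d).+1) (Wx x *m expZ (phit d phi j)))
    ord0 ord0.

Definition even_poly_p (p : {poly C}) : Prop :=
  forall k : nat, odd k -> p`_k = 0.

Definition mxpow n (M : 'M[C]_n) (k : nat) : 'M[C]_n :=
  iter k (mulmx M) 1%:M.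
Definition poly_mx n (p : {poly C}) (M : 'M[C]_n) : 'M[C]_n :=
  \sum_(k < size p) p`_k *: mxpow M k.

End Defs.

From Pilot Require Import Defs.
From HB Require Import structures.
From mathcomp Require Import all_boot all_order all_algebra.
From mathcomp Require Import complex.
From mathcomp Require Import reals trigo.
From mathcomp Require Import ring lra zify.
Set Implicit Arguments. Unset Strict Implicit. Unset Printing Implicit Defensive.
Import Order.TTheory GRing.Theory Num.Theory.
Local Open Scope ring_scope.
Local Open Scope complex_scope.

(* Write U = [[A, B], [C, D]] and M = A^dag A.  Unitarity gives B B^dag = 1 - A A^dag,
   D B^dag = - C A^dag, C^dag C = 1 - M and D^dag C = - B^dag A, and with these one checks
   that every factor U^dag Z_a U Z_b maps a block column [f(M); B^dag A g(M)] to a column of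
   the same shape, the pair of polynomials (f, g) being updated by an explicit step that
   raises degrees by one.  The matrix W(x) is a unitary of the same block form
   (A = D = x, B = C = i sqrt(1 - x^2)), and a pair of factors W(x) e^{i t Z} W(x) e^{i t' Z}
   maps (f(x^2), i sqrt(1 - x^2) x g(x^2)) to a vector of the same shape by the same step,
   once t and t' are shifted by +pi/2 and -pi/2: this is where the modified phases come
   from, the two extra pi/4 shifts cancelling each other.  Hence the upper-left block of O
   and P are one and the same polynomial, evaluated at A^dag A and at x^2; the singular value
   decomposition A^dag A = V_1 Sigma^2 V_1^dag then gives the diagonal form. *)

HB.instance Definition _ (K : pzSemiRingType) (k : nat) :=
  Monoid.isLaw.Build 'M[K]_k 1%:M (@mulmx K k k k)
    (@mulmxA K k k k k) (@mul1mx K k k) (@mulmx1 K k k).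

Lemma big_nat_pairs (T : Type) (idx : T) (op : Monoid.law idx) (F : nat -> T) m :
  \big[op/idx]_(1 <= j < (2 * m).+1) F j =
  \big[op/idx]_(0 <= k < m) op (F (2 * k).+1) (F (2 * k).+2).
Proof.
elim: m => [|m IH]; first by rewrite !big_geq.
rewrite [in RHS]big_nat_recr //= -IH mulnS add2n.
by rewrite big_nat_recr // big_nat_recr //= Monoid.mulmA.
Qed.

Lemma ulsubmx_mul_col (K : pzRingType) m1 m2 n1 n2 (X : 'M[K]_(m1 + m2, n1 + n2)) :
  ulsubmx X = usubmx (X *m col_mx 1%:M 0).
Proof. by rewrite -{2}[X]submxK mul_block_col mulmx1 mulmx0 addr0 col_mxKu. Qed.

Section SizeBounds.
Variables (K : nzRingType) (k : nat).
Implicit Types p q : {poly K}.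

Lemma size_polyD_le p q : (size p <= k)%N -> (size q <= k)%N -> (size (p + q)%R <= k)%N.
Proof. by move=> sp sq; rewrite (leq_trans (size_polyD p q)) // geq_max sp sq. Qed.

Lemma size_polyB_le p q : (size p <= k)%N -> (size q <= k)%N -> (size (p - q)%R <= k)%N.
Proof. by move=> sp sq; apply: size_polyD_le; rewrite ?size_polyN. Qed.

Lemma size_scale_le (a : K) p : (size p <= k)%N -> (size (a *: p)%R <= k)%N.
Proof. exact/leq_trans/size_scale_leq. Qed.

Lemma size_mulX_le p : (size p <= k)%N -> (size ('X * p)%R <= k.+1)%N.
Proof.
have [-> _|p0 sp] := eqVneq p 0; first by rewrite mulr0 size_poly0.
by rewrite -commr_polyX size_mulX.
Qed.

End SizeBounds.

Section QspStep.
Variable K : comNzRingType.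
Implicit Types (z w : K) (f g : {poly K}).

Definition qsp_step z1 w1 z2 w2 (fg : {poly K} * {poly K}) : {poly K} * {poly K} :=
  let z := z2 *: fg.1 in let w := w2 *: fg.2 in
  let h1 := z1 *: (z + w - 'X * w) in let h2 := w1 *: (z - 'X * w) in
  (h2 + 'X * (h1 - h2), h1 - h2).

Lemma qsp_stepZ z1 w1 z2 w2 c f g :
  qsp_step z1 w1 z2 w2 (c *: f, c *: g) =
  (c *: (qsp_step z1 w1 z2 w2 (f, g)).1, c *: (qsp_step z1 w1 z2 w2 (f, g)).2).
Proof. by rewrite /qsp_step /=; congr (_, _); rewrite -!mul_polyC; ring. Qed.

Lemma size_qsp_step z1 w1 z2 w2 k f g : (size f <= k.+1)%N -> (size g <= k)%N ->
  (size (qsp_step z1 w1 z2 w2 (f, g)).1 <= k.+2)%N /\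
  (size (qsp_step z1 w1 z2 w2 (f, g)).2 <= k.+1)%N.
Proof.
move=> sf sg; have sf' := leq_trans sf (leqnSn _); have sg' := leq_trans sg (leqnSn _).
by split; repeat (apply: size_polyB_le || apply: size_polyD_le
                  || apply: size_scale_le || apply: size_mulX_le).
Qed.

End QspStep.

Section BlockRecursion.
Variables (K : comNzRingType) (n : nat) (A B C D A' B' C' D' : 'M[K]_n.+1).
Local Notation U := (block_mx A B C D).
(* [U'] stands for the adjoint of [U], hence the transposed placement of its blocks. *)
Local Notation U' := (block_mx A' C' B' D').
Hypotheses (U'U : U' *m U = 1%:M) (UU' : U *m U' = 1%:M).
Local Notation M := (A' *m A).
Local Notation hM := (horner_mx M).
Implicit Types (z w : K) (f g p q : {poly K}).

Lemma block_inv_eqs :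
  [/\ A *m A' + B *m B' = 1%:M, C *m A' + D *m B' = 0,
      A' *m A + C' *m C = 1%:M & B' *m A + D' *m C = 0].
Proof.
move: U'U UU'; rewrite !mulmx_block scalar_mx_block.
by case/eq_block_mx => [? _ ? _] /eq_block_mx[? _ ? _].
Qed.

Definition qsp_col (fg : {poly K} * {poly K}) : 'M[K]_(n.+1 + n.+1, n.+1) :=
  col_mx (hM fg.1) (B' *m A *m hM fg.2).

(* Keyed on [horner_mx]: [rewrite] does not reliably find the generic [rmorphD] and
   [linearZ] instances under [horner_mx M]. *)
Lemma horner_mxD p q : hM (p + q) = hM p + hM q.
Proof. exact: rmorphD. Qed.

Lemma horner_mxN p : hM (- p) = - hM p.
Proof. exact: rmorphN. Qed.

Lemma horner_mxZ c p : hM (c *: p) = c *: hM p.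
Proof. exact: linearZ. Qed.

Lemma horner_mx_mulX p : hM ('X * p) = M *m hM p.
Proof. by rewrite rmorphM /= horner_mx_X mulmxE. Qed.

Lemma mul_block_diag_qsp_col z w f g :
  U *m (block_mx z%:M 0 0 w%:M *m qsp_col (f, g)) =
  col_mx (A *m hM (z *: f + w *: g - 'X * (w *: g))) (C *m hM (z *: f - 'X * (w *: g))).
Proof.
have [AB DB _ _] := block_inv_eqs.
have BB : B *m B' = 1%:M - A *m A' by rewrite -AB addrAC subrr add0r.
have {}DB : D *m B' = - (C *m A') by apply/eqP; rewrite -addr_eq0 addrC DB.
rewrite /qsp_col !mul_block_col !mul_scalar_mx !mul0mx addr0 add0r /=.
rewrite !(horner_mxD, horner_mxN, horner_mxZ, horner_mx_mulX).
rewrite !(mulmxDr, mulmxN) -!scalemxAr !mulmxA BB DB !mulmxBl mul1mx !mulNmx.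
by rewrite scalerBr scalerN addrA.
Qed.

Lemma mul_block_inv_diag_col z w p q :
  U' *m (block_mx z%:M 0 0 w%:M *m col_mx (A *m hM p) (C *m hM q)) =
  qsp_col (w *: q + 'X * (z *: p - w *: q), z *: p - w *: q).
Proof.
have [_ _ AC BD] := block_inv_eqs.
have CC : C' *m C = 1%:M - M by rewrite -AC addrAC subrr add0r.
have DC : D' *m C = - (B' *m A) by apply/eqP; rewrite -addr_eq0 addrC BD.
rewrite /qsp_col !mul_block_col !mul_scalar_mx !mul0mx addr0 add0r /=.
rewrite !(horner_mxD, horner_mxN, horner_mxZ, horner_mx_mulX).
rewrite !(mulmxDr, mulmxN) -!scalemxAr !mulmxA CC DC !mulmxBl mul1mx !mulNmx.
by rewrite scalerBr scalerN addrCA.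
Qed.

Lemma mul_qsp_factor_col z1 w1 z2 w2 fg :
  U' *m block_mx z1%:M 0 0 w1%:M *m U *m block_mx z2%:M 0 0 w2%:M *m qsp_col fg =
  qsp_col (qsp_step z1 w1 z2 w2 fg).
Proof.
by case: fg => f g; rewrite -!mulmxA mul_block_diag_qsp_col mul_block_inv_diag_col.
Qed.

End BlockRecursion.

Section Phases.
Variable R : realType.
Implicit Types (a b t : R) (f g : {poly R[i]}) (ph : nat -> R).

Lemma mul_ii : 'i * 'i = -1 :> R[i].
Proof. by rewrite -expr2 sqr_i. Qed.

Lemma expiD a b : expi (a + b) = expi a * expi b.
Proof. by rewrite /expi cosD sinD !rmorphB !rmorphD !rmorphM /=; ring: mul_ii. Qed.

(* Defs write ['i] for [Num.imaginary]; a bare ['i :> R[i]] would parse as the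
   complex-number constructor, which [ring] treats as a different atom. *)
Lemma expi_pihalf : expi (pi / 2) = 'i%R :> R[i].
Proof. by rewrite /expi cos_pihalf sin_pihalf rmorph0 rmorph1 add0r mulr1. Qed.

Lemma expiN_pihalf : expi (- (pi / 2)) = - 'i%R :> R[i].
Proof. by rewrite /expi cosN sinN cos_pihalf sin_pihalf rmorph0 rmorphN rmorph1 add0r mulrN1. Qed.

Definition qsp_phase_step a b := qsp_step (expi a) (expi (- a)) (expi b) (expi (- b)).

(* The factor of index m acts first on a column, hence the recursion peels it off first. *)
Fixpoint qsp_iter ph (m : nat) (fg : {poly R[i]} * {poly R[i]}) :=
  if m is k.+1 then qsp_iter ph k (qsp_phase_step (ph (2 * k).+1) (ph (2 * k).+2) fg)
  else fg.

(* [qsp_poly phi d] is the polynomial \tilde P of the statement. *)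
Definition qsp_poly ph (m : nat) : {poly R[i]} := expi (ph 0) *: (qsp_iter ph m (1, 0)).1.

Lemma qsp_iterZ ph m (c : R[i]) f g :
  qsp_iter ph m (c *: f, c *: g) =
  (c *: (qsp_iter ph m (f, g)).1, c *: (qsp_iter ph m (f, g)).2).
Proof.
elim: m f g => [|m IH] f g //=.
by rewrite /qsp_phase_step qsp_stepZ IH -!surjective_pairing.
Qed.

Lemma eq_qsp_iter ph ph' m fg : (forall i, (0 < i <= 2 * m)%N -> ph i = ph' i) ->
  qsp_iter ph m fg = qsp_iter ph' m fg.
Proof.
elim: m fg => [|m IH] fg eph //=.
rewrite (eph (2 * m).+1) ?(eph (2 * m).+2); try lia.
by apply: IH => i im; apply: eph; lia.
Qed.

Lemma qsp_phase_step_shift a b t f :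
  qsp_phase_step a (b + t) (f, 0) = qsp_phase_step a b (expi t *: f, 0).
Proof. by rewrite /qsp_phase_step /qsp_step /= !scaler0 expiD scalerA. Qed.

Lemma size_qsp_iter ph m k f g : (size f <= k.+1)%N -> (size g <= k)%N ->
  (size (qsp_iter ph m (f, g)).1 <= (k + m).+1)%N.
Proof.
elim: m k f g => [|m IH] k f g sf sg /=; first by rewrite addn0.
have [] := size_qsp_step (expi (ph (2 * m).+1)) (expi (- ph (2 * m).+1))
  (expi (ph (2 * m).+2)) (expi (- ph (2 * m).+2)) sf sg.
rewrite /qsp_phase_step; case: qsp_step => f' g' /= sf' sg'.
by rewrite addnS -addSn; apply: IH.
Qed.

Lemma size_qsp_poly ph m : (size (qsp_poly ph m) <= m.+1)%N.
Proof.
have s1 : (size (1%R : {poly R[i]}) <= 1)%N by rewrite size_poly1.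
have s0 : (size (0%R : {poly R[i]}) <= 0)%N by rewrite size_poly0.
exact: size_scale_le (size_qsp_iter ph m s1 s0).
Qed.

Lemma qsp_iter_first_rotation ph ph' m t :
  (forall i, (0 < i <= (2 * m).+1)%N -> ph' i = ph i) ->
  ph' (2 * m).+2 = ph (2 * m).+2 + t ->
  (qsp_iter ph' m.+1 (1, 0)).1 = expi t *: (qsp_iter ph m.+1 (1, 0)).1.
Proof.
move=> eph elast /=; rewrite elast eph ?leqnn // qsp_phase_step_shift.
rewrite -[(_, 0)](congr1 (pair _) (scaler0 _ (expi t))) /qsp_phase_step qsp_stepZ qsp_iterZ.
by rewrite -surjective_pairing (eq_qsp_iter (ph := ph') (ph' := ph)) // => i im; apply: eph; lia.
Qed.

End Phases.

Section Scalar.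
Variable R : realType.
Implicit Types (t x : R) (u v : R[i]).

Definition vec2 u v : 'M[R[i]]_(2, 1) :=
  \matrix_(k < 2, j < 1) (if k == 0 :> nat then u else v).

Lemma mul_expZ_vec2 t u v : expZ t *m vec2 u v = vec2 (expi t * u) (expi (- t) * v).
Proof.
apply/matrixP => k j; rewrite !mxE !big_ord_recr big_ord0 /= !mxE /=.
by case: k => [[|[|//]] ?] /=; rewrite ?mul0r ?add0r ?addr0.
Qed.

Lemma mul_Wx_vec2 x u v :
  let s := (Num.sqrt (1 - x ^+ 2))%:C in
  Wx x *m vec2 u v = vec2 (x%:C * u + 'i * s * v) ('i * s * u + x%:C * v).
Proof.
apply/matrixP => k j; rewrite !mxE !big_ord_recr big_ord0 /= !mxE /=.
by case: k => [[|[|//]] ?] /=; rewrite add0r.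
Qed.

Lemma mxE00_mul_vec2 (M : 'M[R[i]]_2) : M ord0 ord0 = (M *m vec2 1 0) ord0 ord0.
Proof.
rewrite !mxE !big_ord_recr big_ord0 /= !mxE /= mulr1 mulr0 addr0 add0r.
by congr (M _ _); apply: val_inj.
Qed.

(* The angles at which the factors W(x) e^{i th_j Z} act as [qsp_phase_step]. *)
Definition qsp_shift (th : nat -> R) (i : nat) : R :=
  if odd i then th i + pi / 2 else th i - pi / 2.

Section FixedAbscissa.
Variable x : R.
Hypothesis x_bound : -1 <= x <= 1.
Local Notation s := (Num.sqrt (1 - x ^+ 2))%:C.
Local Notation y := (x%:C * x%:C).

Lemma sqrt_1Bsqr_sqr : s * s = 1 - y.
Proof.
have x2_le1 : 0 <= 1 - x ^+ 2 by case/andP: x_bound => *; nra.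
by rewrite -rmorphM -expr2 sqr_sqrtr // rmorphB rmorph1 rmorphXn expr2.
Qed.

Definition qsp_vec (fg : {poly R[i]} * {poly R[i]}) : 'M[R[i]]_(2, 1) :=
  vec2 fg.1.[y] ('i * s * x%:C * fg.2.[y]).

Lemma mul_Wx_expZ_pair_qsp_vec t1 t2 fg :
  Wx x *m expZ t1 *m (Wx x *m expZ t2) *m qsp_vec fg =
  qsp_vec (qsp_phase_step (t1 + pi / 2) (t2 - pi / 2) fg).
Proof.
rewrite /qsp_vec /qsp_phase_step /qsp_step /= -!mulmxA !(mul_expZ_vec2, mul_Wx_vec2).
rewrite !(hornerD, hornerN, hornerZ, hornerM, hornerX).
rewrite ?opprD ?opprB ?opprK !expiD expi_pihalf expiN_pihalf.
by congr vec2; ring: (mul_ii R) sqrt_1Bsqr_sqr.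
Qed.

Lemma mul_prod_qsp_vec (th : nat -> R) m fg :
  \big[mulmx/1%:M]_(0 <= k < m) (Wx x *m expZ (th (2 * k).+1) *m (Wx x *m expZ (th (2 * k).+2)))
    *m qsp_vec fg = qsp_vec (qsp_iter (qsp_shift th) m fg).
Proof.
have shift_odd k : qsp_shift th (2 * k).+1 = th (2 * k).+1 + pi / 2.
  by rewrite /qsp_shift /= mul2n odd_double.
have shift_even k : qsp_shift th (2 * k).+2 = th (2 * k).+2 - pi / 2.
  by rewrite /qsp_shift /= mul2n odd_double.
elim: m fg => [|m IH] fg; first by rewrite big_geq // mul1mx.
by rewrite big_nat_recr //= -mulmxA mul_Wx_expZ_pair_qsp_vec IH shift_odd shift_even.
Qed.

Lemma Pqsp_qsp_iter d phi :
  Pqsp d phi x = expi (phit d phi 0) * (qsp_iter (qsp_shift (phit d phi)) d (1, 0)).1.[y].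
Proof.
have e10 : vec2 1 0 = qsp_vec (1, 0) by rewrite /qsp_vec /= hornerC horner0 mulr0.
rewrite /Pqsp mxE00_mul_vec2 -mulmxA big_nat_pairs e10 mul_prod_qsp_vec mul_expZ_vec2.
by rewrite /qsp_vec !mxE.
Qed.

End FixedAbscissa.

Lemma qsp_shift_phit d phi :
  (forall i, (0 < i <= (2 * d).+1)%N -> qsp_shift (phit d.+1 phi) i = phi i) /\
  qsp_shift (phit d.+1 phi) (2 * d).+2 = phi (2 * d).+2 + - (pi / 4).
Proof.
have e2d : (2 * d.+1 = (2 * d).+2)%N by rewrite mulnS add2n.
split=> [i /andP[i0 id]|].
  have [i_ne0 i_ne2d] : i != 0%N /\ i != (2 * d.+1)%N by split; apply/eqP; lia.
  by rewrite /qsp_shift /phit (negPf i_ne0) (negPf i_ne2d); case: odd; lra.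
by rewrite /qsp_shift /phit e2d eqxx /= mul2n odd_double /=; lra.
Qed.

Lemma Pqsp_qsp_poly d phi x : -1 <= x <= 1 -> (0 < d)%N ->
  Pqsp d phi x = (qsp_poly phi d).[x%:C * x%:C].
Proof.
move=> x_bound; case: d => // d _; have [mid last] := qsp_shift_phit d phi.
rewrite Pqsp_qsp_iter // (qsp_iter_first_rotation mid last) /qsp_poly !hornerZ.
by rewrite /phit eqxx mulrA -expiD; congr (expi _ * _); lra.
Qed.

End Scalar.

Section Adjoint.
Variable R : realType.

Lemma adjE m n (A : 'M[R[i]]_(m, n)) : adj A = (map_mx conjc A)^T.
Proof. by apply/matrixP => i j; rewrite !mxE. Qed.

Lemma adjM m n p (A : 'M[R[i]]_(m, n)) (B : 'M[R[i]]_(n, p)) :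
  adj (A *m B) = adj B *m adj A.
Proof. by rewrite !adjE map_mxM trmx_mul. Qed.

Lemma adjK m n (A : 'M[R[i]]_(m, n)) : adj (adj A) = A.
Proof. by apply/matrixP => i j; rewrite !mxE conjcK. Qed.

Lemma adj_block m1 m2 n1 n2 (A : 'M[R[i]]_(m1, n1)) (B : 'M[R[i]]_(m1, n2))
    (C : 'M[R[i]]_(m2, n1)) (D : 'M[R[i]]_(m2, n2)) :
  adj (block_mx A B C D) = block_mx (adj A) (adj C) (adj B) (adj D).
Proof. by rewrite !adjE map_block_mx tr_block_mx. Qed.

Lemma adj_diag_real n (s : 'I_n -> R) :
  adj (diag_mx (\row_k (s k)%:C)) = diag_mx (\row_k (s k)%:C).
Proof.
apply/matrixP => i j; rewrite !mxE eq_sym.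
by case: eqP => [->|_]; rewrite ?mulr1n ?mulr0n ?conjc_real ?conjc0.
Qed.

Lemma unitary_block_inv n1 n2 (A : 'M[R[i]]_n1) (B : 'M[R[i]]_(n1, n2))
    (C : 'M[R[i]]_(n2, n1)) (D : 'M[R[i]]_n2) :
  unitary (block_mx A B C D) ->
  block_mx (adj A) (adj C) (adj B) (adj D) *m block_mx A B C D = 1%:M /\
  block_mx A B C D *m block_mx (adj A) (adj C) (adj B) (adj D) = 1%:M.
Proof. by rewrite /unitary adj_block => -[]. Qed.

End Adjoint.

Section UnitaryBlock.
Variables (R : realType) (n : nat) (A B C D : 'M[R[i]]_n.+1).
Hypothesis U_unitary : unitary (block_mx A B C D).
Local Notation U := (block_mx A B C D).
Local Notation qcol := (qsp_col A (adj A) (adj B)).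

Lemma mul_Zphi_factor_qsp_col (a b : R) fg :
  adj U *m Zphi n.+1 a *m U *m Zphi n.+1 b *m qcol fg = qcol (qsp_phase_step a b fg).
Proof.
have [U'U UU'] := unitary_block_inv U_unitary.
by rewrite /Zphi adj_block (mul_qsp_factor_col U'U UU').
Qed.

Lemma mul_prod_qsp_col (ph : nat -> R) m fg :
  \big[mulmx/1%:M]_(1 <= j < m.+1)
     (adj U *m Zphi n.+1 (ph (2 * j).-1) *m U *m Zphi n.+1 (ph (2 * j))) *m qcol fg
  = qcol (qsp_iter ph m fg).
Proof.
(* In [Oseq] the index [2 * j] is a ring product on [nat], whence [natrME] and [natn]. *)
rewrite big_add1 succnK (eq_bigr (fun k => adj U *m Zphi n.+1 (ph (2 * k).+1) *m U
  *m Zphi n.+1 (ph (2 * k).+2))) => [|k _]; last by rewrite !natrME ?natn !mulnS !add2n.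
elim: m fg => [|m IH] fg; first by rewrite big_geq // mul1mx.
by rewrite big_nat_recr //= -mulmxA mul_Zphi_factor_qsp_col IH.
Qed.

Lemma ulsubmx_Oseq d phi : ulsubmx (Oseq U d phi) = horner_mx (adj A *m A) (qsp_poly phi d).
Proof.
have col10 : col_mx 1%:M 0 = qcol (1, 0).
  by rewrite /qsp_col /= -polyC1 horner_mx_C rmorph0 mulmx0.
rewrite /Oseq ulsubmx_mul_col col10 -mulmxA mul_prod_qsp_col /Zphi /qsp_col.
by rewrite mul_block_col col_mxKu mul0mx addr0 mul_scalar_mx /qsp_poly linearZ.
Qed.

End UnitaryBlock.

Section SingularValues.
Variable R : realType.

Lemma horner_mx_unitary_conj n (V X : 'M[R[i]]_n.+1) p :
  unitary V -> horner_mx (V *m X *m adj V) p = V *m horner_mx X p *m adj V.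
Proof.
case=> VV' V'V; elim/poly_ind: p => [|p c IH]; first by rewrite !rmorph0 mulmx0 mul0mx.
rewrite !rmorphD !rmorphM /= !horner_mx_X !horner_mx_C IH -!mulmxE.
rewrite mulmxDr mulmxDl mul_mx_scalar -scalemxAl VV' scalemx1.
by rewrite !mulmxA -[V *m horner_mx X p *m adj V *m V]mulmxA V'V mulmx1.
Qed.

Lemma poly_mx_horner n (X : 'M[R[i]]_n.+1) p : poly_mx p X = horner_mx X p.
Proof.
have mxpowE k : mxpow X k = X ^+ k.
  by elim: k => // k IH; rewrite /mxpow /= -/(mxpow X k) IH exprS mulmxE.
rewrite /poly_mx -[in RHS](coefK p) poly_def linear_sum /=; apply: eq_bigr => k _.
by rewrite linearZ /= rmorphXn /= horner_mx_X mxpowE.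
Qed.

Lemma adj_mul_svd m (A W V : 'M[R[i]]_m) (s : 'I_m -> R) :
  unitary W -> A = W *m diag_mx (\row_k (s k)%:C) *m adj V ->
  adj A *m A = V *m diag_mx (\row_k ((s k)%:C * (s k)%:C)) *m adj V.
Proof.
move=> [_ W'W] ->; rewrite !adjM adjK adj_diag_real !mulmxA.
rewrite -[V *m _ *m adj W *m W]mulmxA W'W mulmx1 -[V *m _ *m _]mulmxA mulmx_diag.
by congr (_ *m diag_mx _ *m _); apply/rowP => j; rewrite !mxE.
Qed.

Lemma mulmx_adj_diag_ge0 m n (X : 'M[R[i]]_(m, n)) k : 0 <= (adj X *m X) k k.
Proof. by rewrite !mxE; apply: sumr_ge0 => j _; rewrite !mxE mulrC mulcJ_ge0. Qed.

Lemma singular_value_le1 m (A C W V : 'M[R[i]]_m) (s : 'I_m -> R) :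
  adj A *m A + adj C *m C = 1%:M -> unitary W -> unitary V -> (forall k, 0 <= s k) ->
  A = W *m diag_mx (\row_k (s k)%:C) *m adj V -> forall k, s k <= 1.
Proof.
move=> AC W_unitary [VV' V'V] s_ge0 svdA k.
have CV : adj (C *m V) *m (C *m V) = 1%:M - diag_mx (\row_k ((s k)%:C * (s k)%:C)).
  have -> : diag_mx (\row_k ((s k)%:C * (s k)%:C)) = adj V *m (adj A *m A) *m V.
    by rewrite (adj_mul_svd W_unitary svdA) !mulmxA V'V mul1mx -mulmxA V'V mulmx1.
  rewrite -[adj A *m A](addrK (adj C *m C)) AC mulmxBr mulmxBl mulmx1 V'V adjM !mulmxA.
  by rewrite opprB addrC subrK.
have := mulmx_adj_diag_ge0 (C *m V) k; rewrite CV !mxE eqxx !mulr1n subr_ge0.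
rewrite -rmorphM -[X in _ <= X](rmorph1 (real_complex R)) lecR => s2_le1.
by have := s_ge0 k; nra.
Qed.

End SingularValues.

Theorem mainTheorem8 (R : realType) (n : nat)
  (U : 'M[R[i]]_(n.+1 + n.+1))
  (W1 V1 : 'M[R[i]]_n.+1) (sigma : 'I_n.+1 -> R)
  (d : nat) (phi : nat -> R) :
  unitary U ->
  unitary W1 -> unitary V1 ->
  (forall k, 0 <= sigma k) ->
  ulsubmx U = W1 *m diag_mx (\row_k (sigma k)%:C) *m adj V1 ->
  (0 < d)%N ->
  exists p : {poly R[i]},
    [/\ (size p <= (2 * d).+1)%N,
        even_poly_p p,
        (forall x : R, -1 <= x <= 1 -> Pqsp d phi x = p.[x%:C]),
        ulsubmx (Oseq U d phi)
          = V1 *m diag_mx (\row_k Pqsp d phi (sigma k)) *m adj V1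
      & exists pt : {poly R[i]},
          p = pt \Po 'X^2 /\
          ulsubmx (Oseq U d phi)
            = poly_mx pt (adj (ulsubmx U) *m ulsubmx U)].
Proof.
move=> U_unitary W1_unitary V1_unitary sigma_ge0 svdA d_gt0.
set A := ulsubmx U in svdA *.
have eU : U = block_mx A (ursubmx U) (dlsubmx U) (drsubmx U) by rewrite submxK.
have U_blocks : unitary (block_mx A (ursubmx U) (dlsubmx U) (drsubmx U)) by rewrite -eU.
have O_ul : ulsubmx (Oseq U d phi) = horner_mx (adj A *m A) (qsp_poly phi d).
  by rewrite {1}eU (ulsubmx_Oseq U_blocks).
have [U'U UU'] := unitary_block_inv U_blocks.
have [_ _ AC _] := block_inv_eqs U'U UU'.
have sigma_le1 := singular_value_le1 AC W1_unitary V1_unitary sigma_ge0 svdA.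
have P_qsp x : -1 <= x <= 1 -> Pqsp d phi x = (qsp_poly phi d \Po 'X^2).[x%:C].
  by move=> x_bound; rewrite horner_comp hornerXn expr2 Pqsp_qsp_poly.
exists (qsp_poly phi d \Po 'X^2); split=> //.
- apply: leq_trans (size_comp_poly_leq _ _) _; rewrite size_polyXn.
  by have := size_qsp_poly phi d; move: (size _) => s; lia.
- by move=> k k_odd; rewrite coef_comp_poly_Xn // dvdn2 k_odd.
- rewrite O_ul (adj_mul_svd W1_unitary svdA) horner_mx_unitary_conj // horner_mx_diag.
  congr (_ *m diag_mx _ *m _); apply/rowP => k; rewrite !mxE Pqsp_qsp_poly //.
  by rewrite sigma_le1 andbT (le_trans _ (sigma_ge0 k)) // lerN10.
- by exists (qsp_poly phi d); rewrite O_ul poly_mx_horner.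
Qed.
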